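(* Let $\mu,\beta,\gamma$ be positive reals with $\gamma+\beta+\sqrt{\mu}<\frac{1}{2000}$. Let $G$ be a bipartite graph with bipartition $A\cup B$, $|A|=|B|=m$, minimum degree at least $\frac{m}{10}$ and at least $(1-\beta)m^2$ edges; let $\mathcal{F}$ be a $\mu m$-bounded incompatibility system over $G$; and let $e_i=\{a_i,b_i\}$ ($i=1,\dots,m$, $a_i\in A$, $b_i\in B$) be a perfect matching of $G$, with $f$ the bijection $f(a_i)=b_i$, $f(b_i)=a_i$. Suppose $P=(v_0,v_1,\dots,v_\ell)$ is a proper smooth path in $G$ such that there is no vertex $x\notin V(P)$ for which $(f(x),x,v_0,\dots,v_\ell)$ is a proper smooth path. Then there exists a set $Z\subseteq N(v_0)\cap V(P)$ with $|Z|\ge d(v_0)-(25\sqrt{\mu}+2\gamma)m$ such that for every $v_i\in Z$ the path $(v_{i-1},\dots,v_1,v_0,v_i,v_{i+1},\dots,v_\ell)$ is a proper smooth path.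
   Context: All graphs are finite and simple; $N(v)$, $d(v)$ are neighborhood and degree; $|P|$ is the number of vertices of $P$; $\gamma m$ is treated as an integer. An incompatibility system $\mathcal{F}$ over $G=(V,E)$ is a family $\{F_v\}_{v\in V}$ where each $F_v$ is a set of unordered pairs $\{e,e'\}$ of distinct edges with $e\cap e'=\{v\}$; edges are incompatible if the pair lies in some $F_v$, compatible otherwise. A path or cycle is compatible with $\mathcal{F}$ if every pair of its edges is compatible. $\mathcal{F}$ is $\Delta$-bounded if for every vertex $v$ and edge $e\ni v$, at most $\Delta$ other edges $e'\ni v$ satisfy $\{e,e'\}\in F_v$. For a path $P=(v_0,\dots,v_\ell)$ and a vertex $w$, a vertex $v_i\in V(P)$ adjacent to $w$ is a bad neighbor of $w$ in $P$ if $\{w,v_i\}$ is incompatible with $\{v_i,v_{i-1}\}$ or with $\{v_i,v_{i+1}\}$ (for those of these that are edges of $P$); $w$ is $\delta$-good for $P$ if it has fewer than $\delta|P|$ bad neighbors in $P$. A path or cycle $H$ of $G$ is proper if it contains all edges $e_1,\dots,e_{\gamma m}$ and $f(V(H)\cap A)=V(H)\cap B$. Let $X_A$ be the set of $x\in A$ for which there are at least $\sqrt{\mu}m$ indices $i$ such that $\{a_i,b_i\}$ and $\{x,b_i\}$ are incompatible edges, and $X_B$ the set of $y\in B$ for which there are at least $\sqrt{\mu}m$ indices $i$ such that $\{a_i,b_i\}$ and $\{a_i,y\}$ are incompatible edges. A proper path $P=(v_0,\dots,v_\ell)$ with $v_0\in A$, $v_\ell\in B$ is smooth if (i) $P$ is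 compatible with $\mathcal{F}$, (ii) $v_0$ and $v_\ell$ are $8\sqrt{\mu}$-good for $P$, and (iii) $v_0\notin X_A$ and $v_\ell\notin X_B$. (A ''proper smooth path'' is in particular required to have its first vertex in $A$ and last vertex in $B$.) *)

From mathcomp Require Import all_boot all_order all_algebra.
From mathcomp Require Import reals.
Set Implicit Arguments. Unset Strict Implicit. Unset Printing Implicit Defensive.
Import Order.TTheory GRing.Theory Num.Theory.

Section IncompatPaths.
Variable T : finType.
Variable adj : rel T.
(* incompatibility system: [inc v x y] encodes {{v,x},{v,y}} \in F_v *)
Variable inc : T -> T -> T -> bool.

Definition simple_graph := symmetric adj /\ irreflexive adj.

Definition incompat_system :=
  forall v x y, inc v x y -> [&& adj v x, adj v y, x != y & inc v y x].

Definition bounded_inc (R : realType) (Delta : R) :=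
  forall v x, adj v x -> (#|[set y | inc v x y]|%:R <= Delta)%R.

Definition nbhd (v : T) : {set T} := [set y | adj v y].
Definition deg (v : T) : nat := #|nbhd v|.

Definition is_gpath (P : seq T) : bool :=
  if P is x :: s then path adj x s && uniq P else false.

Definition pedges (P : seq T) : seq (T * T) := zip P (behead P).

Definition incomp_edges (p q : T * T) : bool :=
  let: (u1, w1) := p in let: (u2, w2) := q in
  [|| (u1 == u2) && inc u1 w1 w2, (u1 == w2) && inc u1 w1 u2,
      (w1 == u2) && inc w1 u1 w2 | (w1 == w2) && inc w1 u1 u2].

Definition compatible_path (P : seq T) : bool :=
  all (fun p => all (fun q => ~~ incomp_edges p q) (pedges P)) (pedges P).

Definition path_has_edge (P : seq T) (x y : T) : bool :=
  ((x, y) \in pedges P) || ((y, x) \in pedges P).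

Definition bad_nb (P : seq T) (w v : T) : bool :=
  let i := index v P in
  [&& v \in P, adj w v &
   ((0 < i)%N && inc v w (nth v P i.-1)) || ((i.+1 < size P)%N && inc v w (nth v P i.+1))].

Definition good (R : realType) (delta : R) (P : seq T) (w : T) : bool :=
  (#|[set v | bad_nb P w v]|%:R < delta * (size P)%:R)%R.

Variables (m : nat) (A B : {set T}) (a b : 'I_m -> T).

Definition fmatch (x : T) : T :=
  match [pick i | a i == x] with
  | Some i => b i
  | None => match [pick i | b i == x] with Some i => a i | None => x end
  end.

Definition proper_path (k : nat) (P : seq T) : bool :=
  [forall i : 'I_m, (i < k)%N ==> path_has_edge P (a i) (b i)] &&
  (fmatch @: [set x | (x \in P) && (x \in A)] == [set x | (x \in P) && (x \in B)]).

Definition X_A (R : realType) (mu : R) : {set T} :=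
  [set x in A | (Num.sqrt mu * m%:R <= #|[set i : 'I_m | inc (b i) (a i) x]|%:R)%R].
Definition X_B (R : realType) (mu : R) : {set T} :=
  [set y in B | (Num.sqrt mu * m%:R <= #|[set i : 'I_m | inc (a i) (b i) y]|%:R)%R].

Definition proper_smooth (R : realType) (mu : R) (k : nat) (P : seq T) : bool :=
  if P is v0 :: s then
    let vl := last v0 s in
    [&& is_gpath P, proper_path k P, v0 \in A, vl \in B,
        compatible_path P,
        good (8 * Num.sqrt mu) P v0, good (8 * Num.sqrt mu) P vl,
        v0 \notin X_A mu & vl \notin X_B mu]
  else false.

End IncompatPaths.

From mathcomp Require Import all_boot all_order all_algebra.
From mathcomp Require Import reals.
From mathcomp Require Import zify ring lra.
Import Order.TTheory GRing.Theory Num.Theory.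
Set Implicit Arguments. Unset Strict Implicit. Unset Printing Implicit Defensive.

(* Call a neighbour v = v_i of v_0 on P rotatable if the rotated path
   (v_{i-1}, ..., v_0, v_i, ..., v_l), which trades the edge v_{i-1}v_i for v_0v_i,
   is again proper smooth.  This holds unless v falls in one of six exceptional
   sets: v = b_j with j < gamma m (the lost edge is some e_j), the new edge v_0v is
   incompatible with v_0v_1 or with v_0v_l (the latter would make v_0 a bad
   neighbour of v_l), v is a bad neighbour of v_0, or v_{i-1} lies in X_A or is not
   good.  Likewise a neighbour b_j of v_0 off P would give the proper smooth
   extension (a_j, b_j, v_0, ..., v_l) unless j falls in one of six exceptional
   sets, so maximality of P confines N(v_0) \ V(P) to those.  Each exceptional set
   has at most gamma m, mu m (F is mu m-bounded), 16 sqrt(mu) m (v_0 is good and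
   |P| <= 2m), |X_A| <= sqrt(mu) m or #{x not good} <= sqrt(mu) m / 4 elements;
   the last two bounds are Markov-type double counts over the matching and over
   the vertices of P. *)

Section PathEdges.
Variable T : finType.
Implicit Types (s P Q : seq T) (c d x y z : T).

Lemma pedges_nthP s x y :
  reflect (exists2 j, j.+1 < size s & x = nth x s j /\ y = nth x s j.+1)
          ((x, y) \in pedges s).
Proof.
have size_pedges : size (pedges s) = minn (size s) (size s).-1.
  by rewrite size_zip size_behead.
apply: (iffP (nthP (x, y))); rewrite size_pedges => -[j Hj].
  rewrite nth_zip_cond size_pedges Hj /= nth_behead => -[<- <-].
  by exists j; [lia | split; apply: set_nth_default; lia].
move=> [Ex Ey]; exists j; first lia.
rewrite nth_zip_cond size_pedges ifT /=; last lia.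
rewrite nth_behead {2}Ey.
by congr pair; [| apply: set_nth_default]; rewrite -?Ex.
Qed.

Lemma path_has_edge_mem s x y : path_has_edge s x y -> (x \in s) && (y \in s).
Proof.
have mem2 u w : (u, w) \in pedges s -> (u \in s) && (w \in s).
  by case/pedges_nthP=> j Hj [-> ->]; rewrite !mem_nth //; apply: ltnW.
by case/orP=> /mem2 /andP [xs ys]; rewrite xs ys.
Qed.

Lemma mem_pedges_succ s x y : uniq s ->
  ((x, y) \in pedges s) = [&& x \in s, (index x s).+1 < size s & y == nth x s (index x s).+1].
Proof.
move=> us; apply/pedges_nthP/idP.
  move=> [j Hj [Ex Ey]].
  have xs : x \in s by rewrite Ex mem_nth //; apply: ltnW.
  have -> : index x s = j by rewrite Ex index_uniq //; apply: ltnW.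
  by rewrite xs Hj -Ey eqxx.
move=> /and3P [xs Hi /eqP Ey].
by exists (index x s); rewrite ?nth_index.
Qed.

Lemma mem_pedges_pred s x y : uniq s ->
  ((y, x) \in pedges s) = [&& x \in s, 0 < index x s & y == nth x s (index x s).-1].
Proof.
move=> us; apply/pedges_nthP/idP.
  move=> [j Hj [Ey Ex]].
  have xs : x \in s by rewrite Ex mem_nth.
  have Hi : index x s = j.+1.
    by rewrite {1}Ex (set_nth_default x y Hj) index_uniq.
  by rewrite xs Hi /= Ey (set_nth_default x y) ?eqxx //; lia.
move=> /and3P [xs Hi /eqP Ey].
have Hs : index x s < size s by rewrite index_mem.
exists (index x s).-1; first by rewrite prednK.
rewrite prednK // nth_index //; split=> //.
by rewrite [LHS]Ey; apply: set_nth_default; apply: leq_ltn_trans (leq_pred _) Hs.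
Qed.

Lemma path_has_edge_sym s x y : path_has_edge s x y = path_has_edge s y x.
Proof. exact: orbC. Qed.

Lemma path_has_edge_nth d s i : 0 < i < size s ->
  path_has_edge s (nth d s i.-1) (nth d s i).
Proof.
case/andP=> i_gt0 i_lt; apply/orP; left; apply/pedges_nthP.
by exists i.-1; rewrite prednK //; split; apply: set_nth_default; rewrite ?prednK // ltnW.
Qed.

Definition same_edge c z x y := ((c == x) && (z == y)) || ((c == y) && (z == x)).

Lemma same_edgeC c z x y : same_edge c z x y = same_edge c z y x.
Proof. by rewrite /same_edge orbC. Qed.

Lemma same_edgeP c z x y :
  reflect ((c = x /\ z = y) \/ (c = y /\ z = x)) (same_edge c z x y).
Proof.
by apply: (iffP orP) => [[] /andP [/eqP -> /eqP ->] | [[-> ->] | [-> ->]]];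
  rewrite ?eqxx; auto.
Qed.

Lemma path_has_edge_cons2 x y s c z :
  path_has_edge [:: x, y & s] c z = same_edge c z x y || path_has_edge (y :: s) c z.
Proof.
rewrite /path_has_edge /same_edge [pedges _]/= !in_cons !xpair_eqE.
by do ![case: (_ \in _)]; do ![case: (_ == _)].
Qed.

Lemma path_has_edge_cat d s1 s2 c z : s1 != [::] -> s2 != [::] ->
  path_has_edge (s1 ++ s2) c z =
  [|| path_has_edge s1 c z, same_edge c z (last d s1) (head d s2)
    | path_has_edge s2 c z].
Proof.
case: s1 => // x s1; case: s2 => // y s2 _ _ /=.
elim: s1 x => [|w s1 IH] x; first by rewrite path_has_edge_cons2.
by rewrite cat_cons !path_has_edge_cons2 IH /= orbA.
Qed.

Lemma path_has_edge_rev s c z : path_has_edge (rev s) c z = path_has_edge s c z.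
Proof.
elim: s => [|x [|y t] IH] //.
rewrite rev_cons -cats1 (path_has_edge_cat x) -?size_eq0 ?size_rev //=.
by rewrite IH path_has_edge_cons2 orbF orbC same_edgeC rev_cons last_rcons.
Qed.

Lemma path_has_edge_head x s y : uniq (x :: s) ->
  path_has_edge (x :: s) x y -> y = nth x (x :: s) 1.
Proof.
move=> us; rewrite /path_has_edge mem_pedges_succ // mem_pedges_pred //= eqxx /=.
by rewrite andbF orbF => /and3P [_ _ /eqP].
Qed.

Lemma head_rev d s : head d (rev s) = last d s.
Proof. by case/lastP: s => // t x; rewrite rev_rcons last_rcons. Qed.

Lemma last_rev d s : last d (rev s) = head d s.
Proof. by rewrite -(revK s) head_rev revK. Qed.

Definition posa_rotation P i := rev (take i P) ++ drop i P.

Lemma perm_posa_rotation P i : perm_eq (posa_rotation P i) P.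
Proof. by rewrite /posa_rotation -{3}(cat_take_drop i P) perm_cat2r perm_rev. Qed.

Section PosaRotation.
Variables (d : T) (P : seq T) (i : nat).
Hypotheses (i_gt0 : 0 < i) (i_lt : i < size P).

Let take_nil : take i P != [::].
Proof. by rewrite -size_eq0 size_takel ?(ltnW i_lt) // -lt0n. Qed.

Let drop_nil : drop i P != [::].
Proof. by rewrite -size_eq0 size_drop subn_eq0 -ltnNge. Qed.

Let head_take : head d (take i P) = head d P.
Proof. by rewrite -!nth0 nth_take. Qed.

Let head_drop : head d (drop i P) = nth d P i.
Proof. by rewrite -nth0 nth_drop addn0. Qed.

Let last_take : last d (take i P) = nth d P i.-1.
Proof.
by rewrite -nth_last size_takel ?(ltnW i_lt) // nth_take // prednK.
Qed.

Let path_has_edge_take_drop c z : path_has_edge P c z =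
  [|| path_has_edge (take i P) c z, same_edge c z (nth d P i.-1) (nth d P i)
    | path_has_edge (drop i P) c z].
Proof. by rewrite -{1}(cat_take_drop i P) (path_has_edge_cat d) // last_take head_drop. Qed.

Let path_has_edge_rotation c z : path_has_edge (posa_rotation P i) c z =
  [|| path_has_edge (take i P) c z, same_edge c z (head d P) (nth d P i)
    | path_has_edge (drop i P) c z].
Proof.
rewrite (path_has_edge_cat d) -?size_eq0 ?size_rev ?size_eq0 //.
by rewrite path_has_edge_rev last_rev head_take head_drop.
Qed.

Lemma head_posa_rotation : head d (posa_rotation P i) = nth d P i.-1.
Proof.
rewrite -last_take -head_rev /posa_rotation.
have : rev (take i P) != [::] by rewrite -size_eq0 size_rev size_eq0.
by case: (rev (take i P)).
Qed.

Lemma last_posa_rotation : last d (posa_rotation P i) = last d P.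
Proof. by rewrite -{2}(cat_take_drop i P) !last_cat; case: (drop i P) drop_nil. Qed.

Lemma path_has_edge_posa_rotation c z :
  path_has_edge (posa_rotation P i) c z ->
  path_has_edge P c z \/ same_edge c z (head d P) (nth d P i).
Proof.
rewrite path_has_edge_rotation path_has_edge_take_drop.
by case/or3P=> [-> | -> | ->]; rewrite ?orbT; auto.
Qed.

Lemma posa_rotation_keeps_edge c z :
  path_has_edge P c z -> ~~ same_edge c z (nth d P i.-1) (nth d P i) ->
  path_has_edge (posa_rotation P i) c z.
Proof.
rewrite path_has_edge_rotation path_has_edge_take_drop.
by case/or3P=> [-> | /[swap] /negPf -> | ->]; rewrite ?orbT.
Qed.

End PosaRotation.
End PathEdges.

Section PathProperties.
Variables (T : finType) (adj : rel T) (inc : T -> T -> T -> bool).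
Implicit Types (s P Q : seq T) (c w x y z : T).

Lemma path_pedges x s : path adj x s = all (fun p => adj p.1 p.2) (pedges (x :: s)).
Proof. by elim: s x => [|y s IH] x //=; rewrite IH. Qed.

Lemma is_gpathP Q : symmetric adj ->
  is_gpath adj Q <->
  [/\ Q != [::], uniq Q & forall x y, path_has_edge Q x y -> adj x y].
Proof.
move=> adj_sym; case: Q => [|x s]; first by split=> // -[].
rewrite /is_gpath path_pedges; split.
  move=> /andP [/allP Hp us]; split=> // u w /orP [/Hp // | /Hp /=].
  by rewrite adj_sym.
move=> [_ us Hp]; rewrite us andbT; apply/allP => -[u w] uw.
by apply: Hp; rewrite /path_has_edge uw.
Qed.

Lemma compatible_pathP Q :
  compatible_path inc Q <->
  (forall x y z, path_has_edge Q x y -> path_has_edge Q x z -> ~~ inc x y z).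
Proof.
split=> [/allP H x y z | H].
  have K p q : p \in pedges Q -> q \in pedges Q -> ~~ incomp_edges inc p q.
    by move=> /H /allP; apply.
  rewrite /path_has_edge => /orP [Hy|Hy] /orP [Hz|Hz]; apply/negP => h;
    by move/negP: (K _ _ Hy Hz); rewrite /incomp_edges eqxx h ?orbT.
apply/allP => -[u1 w1] H1; apply/allP => -[u2 w2] H2; apply/negP.
have edge p q : (p, q) \in pedges Q -> path_has_edge Q p q && path_has_edge Q q p.
  by move=> pq; rewrite /path_has_edge pq orbT.
move: (edge _ _ H1) (edge _ _ H2) => /andP [e1 e1'] /andP [e2 e2'].
by case/or4P=> /andP [/eqP E h]; subst; [move: (H _ _ _ e1 e2) | move: (H _ _ _ e1 e2')
  | move: (H _ _ _ e1' e2) | move: (H _ _ _ e1' e2')]; rewrite h.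
Qed.

Lemma bad_nbP Q w v : uniq Q ->
  bad_nb adj inc Q w v <->
  [/\ v \in Q, adj w v & exists2 y, path_has_edge Q v y & inc v w y].
Proof.
move=> uQ; rewrite /path_has_edge; split.
  case/and3P=> vQ awv /orP [] /andP [H h]; split=> //.
    exists (nth v Q (index v Q).-1) => //.
    by apply/orP; right; rewrite mem_pedges_pred // vQ H eqxx.
  exists (nth v Q (index v Q).+1) => //.
  by apply/orP; left; rewrite mem_pedges_succ // vQ H eqxx.
case=> vQ awv [y]; rewrite /bad_nb /= vQ awv mem_pedges_succ // mem_pedges_pred // vQ /=.
by case/orP=> /andP [H /eqP ->] h; rewrite H h ?orbT.
Qed.

Lemma good_transfer (R : realType) (delta : R) P Q w :
  (0 <= delta)%R -> size P <= size Q -> uniq P -> uniq Q ->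
  (forall c y, path_has_edge Q c y -> adj w c -> inc c w y -> path_has_edge P c y) ->
  good adj inc delta P w -> good adj inc delta Q w.
Proof.
move=> delta0 sPQ uP uQ QP gP; apply: le_lt_trans (lt_le_trans gP _).
  rewrite ler_nat subset_leq_card //; apply/subsetP => c; rewrite !inE.
  case/(bad_nbP _ _ uQ) => _ awc [y /QP /(_ awc) Pcy /[dup] /Pcy Pcy' h].
  apply/bad_nbP => //; split=> //; last by exists y.
  by case/andP: (path_has_edge_mem Pcy').
by rewrite ler_wpM2l // ler_nat.
Qed.

End PathProperties.

Section Counting.

Lemma double_count (T1 T2 : finType) (r : T1 -> T2 -> bool) :
  \sum_(x : T1) #|[set y | r x y]| = \sum_(y : T2) #|[set x | r x y]|.
Proof.
have card_sum (U V : finType) (q : U -> V -> bool) u :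
    #|[set w | q u w]| = \sum_(w : V) q u w.
  by rewrite -sum1_card big_mkcond /=; apply: eq_bigr => w _; rewrite inE.
under eq_bigr => x _ do rewrite (card_sum _ _ r).
under [RHS]eq_bigr => y _ do rewrite (card_sum _ _ (fun y x => r x y)).
exact: exchange_big.
Qed.

Lemma cards_sepID (U : finType) (D : {set U}) (p : pred U) :
  #|[set x in D | p x]| + #|[set x in D | ~~ p x]| = #|D|.
Proof.
by rewrite -(cardsID [set x | p x] D); congr (_ + _); apply: eq_card => x;
  rewrite !inE andbC.
Qed.

Lemma leq_card_sep_in (U V : finType) (g : U -> V) (D : {set U}) (p : pred U) (Y : {set V}) :
  {in D &, injective g} -> (forall x, x \in D -> p x -> g x \in Y) ->
  #|[set x in D | p x]| <= #|Y|.
Proof.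
move=> g_inj gY; rewrite -(card_in_imset (f := g) (D := [set x in D | p x])); last first.
  by move=> x y; rewrite !inE => /andP [xD _] /andP [yD _]; apply: g_inj.
by apply/subset_leq_card/subsetP => y /imsetP [x]; rewrite !inE => /andP [xD px] ->; apply: gY.
Qed.

Lemma card_ord_lt m k : #|[set j : 'I_m | j < k]| <= k.
Proof.
rewrite cardE -(size_map val) -{2}[k](size_iota 0); apply: uniq_leq_size.
  by rewrite (map_inj_uniq val_inj) enum_uniq.
by move=> i /mapP [j]; rewrite mem_enum inE => jk ->; rewrite mem_iota add0n.
Qed.

Local Open Scope ring_scope.

Lemma markov_card (R : numDomainType) (U : finType) (F : U -> R) (t : R) :
  (forall x, 0 <= F x) -> #|[set x | t <= F x]|%:R * t <= \sum_x F x.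
Proof.
move=> F_ge0; rewrite (bigID (mem [set x | t <= F x])) /= -[leLHS]addr0.
apply: lerD; last exact: sumr_ge0.
rewrite mulrC mulr_natr -sumr_const; apply: ler_sum => x.
by rewrite inE.
Qed.

Lemma card_sep_nand (R : numDomainType) (U : finType) (D : {set U}) (p q : pred U) :
  #|[set x in D | ~~ (p x && q x)]|%:R <=
  #|[set x in D | ~~ p x]|%:R + #|[set x in D | ~~ q x]|%:R :> R.
Proof.
rewrite -natrD ler_nat; apply: leq_trans (leq_card_setU _ _); apply: subset_leq_card.
by apply/subsetP => x; rewrite !inE negb_and andb_orr.
Qed.

End Counting.

Section SmoothPaths.
Variables (R : realType) (mu : R) (T : finType) (adj : rel T).
Variable inc : T -> T -> T -> bool.
Variables (A B : {set T}) (m k : nat) (a b : 'I_m -> T).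
Hypotheses (adj_sym : symmetric adj) (adj_irr : irreflexive adj).
Hypothesis AB_disjoint : [disjoint A & B].
Hypothesis adj_bipartite :
  forall x y, adj x y -> ((x \in A) && (y \in B)) || ((x \in B) && (y \in A)).
Hypothesis inc_system : incompat_system adj inc.
Hypotheses (a_inj : injective a) (b_inj : injective b).
Hypotheses (a_A : forall j, a j \in A) (b_B : forall j, b j \in B).
Hypothesis adj_ab : forall j, adj (a j) (b j).
Hypothesis mu_gt0 : (0 < mu)%R.
Hypothesis inc_bounded : bounded_inc adj inc (mu * m%:R).
Hypotheses (card_A : #|A| = m) (card_B : #|B| = m) (AB_cover : A :|: B = [set: T]).

Local Notation PS := (proper_smooth adj inc A B a b mu k).
Local Notation good8 := (good adj inc (8 * Num.sqrt mu)).
Local Notation XA := (X_A inc A a b mu).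
Local Notation XB := (X_B inc B a b mu).
Local Notation f := (fmatch a b).

Lemma A_notin_B x : x \in A -> x \notin B.
Proof. by move=> xA; rewrite (disjointFr AB_disjoint xA). Qed.

Lemma B_notin_A x : x \in B -> x \notin A.
Proof. by apply: contraL; apply: A_notin_B. Qed.

Lemma adj_A_B x y : adj x y -> x \in A -> y \in B.
Proof.
by case/adj_bipartite/orP=> /andP [xS yS] xA //; rewrite (negPf (A_notin_B xA)) in xS.
Qed.

Lemma adj_B_A x y : adj x y -> x \in B -> y \in A.
Proof.
by case/adj_bipartite/orP=> /andP [xS yS] xB //; rewrite (negPf (A_notin_B xS)) in xB.
Qed.

Lemma inc_sym v x y : inc v x y -> inc v y x.
Proof. by move=> /inc_system /and4P []. Qed.

Lemma inc_irr v x : inc v x x = false.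
Proof. by apply/negP => /inc_system /and4P [_ _]; rewrite eqxx. Qed.

Lemma fmatch_a j : f (a j) = b j.
Proof.
rewrite /fmatch; case: pickP => [i /eqP /a_inj -> // | /(_ j)].
by rewrite eqxx.
Qed.

Lemma fmatch_b j : f (b j) = a j.
Proof.
rewrite /fmatch; case: pickP => [i /eqP ab | _].
  by move: (A_notin_B (a_A i)); rewrite ab b_B.
by case: pickP => [i /eqP /b_inj -> // | /(_ j)]; rewrite eqxx.
Qed.

Lemma proper_smooth_intro (Q : seq T) d : Q != [::] -> uniq Q ->
  (forall x y, path_has_edge Q x y -> adj x y) -> proper_path A B a b k Q ->
  head d Q \in A -> last d Q \in B -> compatible_path inc Q ->
  good8 Q (head d Q) -> good8 Q (last d Q) ->
  head d Q \notin XA -> last d Q \notin XB -> PS Q.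
Proof.
move=> Qn uQ adjQ; have : is_gpath adj Q by apply/(is_gpathP _ adj_sym).
by case: Q Qn uQ adjQ => // q qs _ _ _ *; apply/and5P; split=> //; apply/and5P.
Qed.

Lemma proper_path_eq_mem (P Q : seq T) : P =i Q ->
  (forall j : 'I_m, j < k -> path_has_edge P (a j) (b j) -> path_has_edge Q (a j) (b j)) ->
  proper_path A B a b k P -> proper_path A B a b k Q.
Proof.
move=> PQ edges /andP [/forallP ej VPQ]; apply/andP; split.
  by apply/forallP => j; apply/implyP => jk; apply: edges jk (implyP (ej j) jk).
have VQ (C : {set T}) : [set x | (x \in Q) && (x \in C)] = [set x | (x \in P) && (x \in C)].
  by apply/setP => x; rewrite !inE PQ.
by rewrite !VQ.
Qed.

Lemma proper_path_matched_notin (P : seq T) j :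
  proper_path A B a b k P -> b j \notin P -> a j \notin P.
Proof.
case/andP=> _ /eqP VPQ; apply: contra => ajP.
have : f (a j) \in f @: [set x | (x \in P) && (x \in A)] by apply: imset_f; rewrite inE ajP a_A.
by rewrite VPQ inE fmatch_a => /andP [].
Qed.

Lemma B_matched x : x \in B -> exists j, x = b j.
Proof.
have -> : B = b @: [set: 'I_m].
  apply/esym/eqP; rewrite eqEcard card_imset // cardsT card_ord card_B leqnn andbT.
  by apply/subsetP => _ /imsetP [j _ ->].
by case/imsetP=> j _ ->; exists j.
Qed.

Lemma card_T_le : #|T| <= 2 * m.
Proof. by rewrite -cardsT -AB_cover mul2n -addnn -{1}card_A -card_B leq_card_setU. Qed.

Section IncompatibilityBounds.
Local Open Scope ring_scope.

Lemma card_inc_le v x : #|[set y | inc v x y]|%:R <= mu * m%:R.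
Proof.
have [/inc_bounded // | vx] := boolP (adj v x).
suff -> : [set y | inc v x y] = set0 by rewrite cards0 mulr_ge0 // ltW.
by apply/setP => y; rewrite !inE; apply: contraNF vx => /inc_system /and4P [].
Qed.

Lemma card_inc_le_sym v y : #|[set x | inc v x y]|%:R <= mu * m%:R.
Proof.
apply: le_trans (card_inc_le v y); rewrite ler_nat subset_leq_card //.
by apply/subsetP => x; rewrite !inE => /inc_sym.
Qed.

Lemma card_XA : (0 < m)%N -> #|XA|%:R <= Num.sqrt mu * m%:R.
Proof.
move=> m_gt0; have sm_gt0 : 0 < Num.sqrt mu * m%:R by rewrite mulr_gt0 ?sqrtr_gt0 ?ltr0n.
rewrite -(ler_pM2r sm_gt0) [leRHS](_ : _ = mu * m%:R * m%:R); last first.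
  by rewrite mulrACA -expr2 sqr_sqrtr ?mulrA // ltW.
pose F x : R := #|[set i | inc (b i) (a i) x]|%:R.
apply: (@le_trans _ _ (#|[set x | Num.sqrt mu * m%:R <= F x]|%:R * (Num.sqrt mu * m%:R))).
  rewrite ler_wpM2r ?(ltW sm_gt0) // ler_nat subset_leq_card //.
  by apply/subsetP => x; rewrite !inE => /andP [_].
apply: le_trans (@markov_card _ _ F _ (fun x => ler0n _ _)) _.
rewrite -natr_sum (double_count (fun x i => inc (b i) (a i) x)) natr_sum.
apply: le_trans (ler_sum _ (fun i _ => card_inc_le (b i) (a i))) _.
by rewrite sumr_const card_ord [leRHS]mulr_natr.
Qed.

End IncompatibilityBounds.

Section SmoothPath.
Variables (v0 : T) (s : seq T).
Local Notation P := (v0 :: s).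
Local Notation v1 := (nth v0 P 1).
Local Notation vl := (last v0 s).
Hypothesis HP : PS P.

Let uP : uniq P.
Proof. by case/and5P: HP => /(is_gpathP _ adj_sym) []. Qed.

Let adjP x y : path_has_edge P x y -> adj x y.
Proof. by move=> Pxy; case/and5P: HP => /(is_gpathP _ adj_sym) [_ _ ->]. Qed.

Let pP : proper_path A B a b k P.
Proof. by case/and5P: HP. Qed.

Let v0A : v0 \in A.
Proof. by case/and5P: HP. Qed.

Let vlB : vl \in B.
Proof. by case/and5P: HP. Qed.

Let cP : compatible_path inc P.
Proof. by case/and5P: HP => _ _ _ _ /and5P []. Qed.

Let good_vl : good8 P vl.
Proof. by case/and5P: HP => _ _ _ _ /and5P []. Qed.

Let vl_notin_XB : vl \notin XB.
Proof. by case/and5P: HP => _ _ _ _ /and5P []. Qed.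

Let compatP x y z : path_has_edge P x y -> path_has_edge P x z -> inc x y z -> False.
Proof. by move=> Pxy Pxz; apply/negP; apply: (compatible_pathP _ _).1 Pxy Pxz. Qed.

Section Rotation.
Variable v : T.
Local Notation i := (index v P).
Local Notation u := (nth v0 P i.-1).
Local Notation Q := (posa_rotation P i).
Hypotheses (vP : v \in P) (adj_v0v : adj v0 v).
Hypothesis b_neq_v : forall j : 'I_m, j < k -> b j != v.
Hypothesis v1_compat : ~~ inc v0 v1 v.
Hypothesis v_not_bad : ~~ bad_nb adj inc P v0 v.
Hypotheses (u_notin_XA : u \notin XA) (good_u : good8 P u).
Hypothesis vl_compat : ~~ inc v0 vl v.

Let v0_neq_v : v0 != v.
Proof. by apply: contraTneq adj_v0v => <-; rewrite adj_irr. Qed.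

Let i_gt0 : 0 < i.
Proof. by rewrite /= (negPf v0_neq_v). Qed.

Let i_lt : i < size P.
Proof. by rewrite index_mem. Qed.

Let vB : v \in B.
Proof. exact: adj_A_B adj_v0v v0A. Qed.

Let Puv : path_has_edge P u v.
Proof. by rewrite -{2}(nth_index v0 vP) path_has_edge_nth ?i_gt0. Qed.

Let uA : u \in A.
Proof. by apply: adj_B_A vB; rewrite adj_sym adjP. Qed.

Let v_compat y : path_has_edge P v y -> inc v y v0 -> False.
Proof.
move=> Pvy /inc_sym h; move/negP: v_not_bad; apply.
by apply/bad_nbP => //; split=> //; exists y.
Qed.

Let perm_Q : perm_eq P Q.
Proof. by rewrite perm_sym perm_posa_rotation. Qed.

Let uQ : uniq Q.
Proof. by rewrite -(perm_uniq perm_Q). Qed.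

Lemma rotation_edge c y : path_has_edge Q c y ->
  path_has_edge P c y \/ (c = v0 /\ y = v) \/ (c = v /\ y = v0).
Proof.
case/(path_has_edge_posa_rotation v0 i_gt0 i_lt); first by left.
by rewrite /= nth_index // => /same_edgeP; right.
Qed.

Lemma rotation_proper : proper_path A B a b k Q.
Proof.
apply: (proper_path_eq_mem (perm_mem perm_Q)) pP => j jk Pab.
apply: (posa_rotation_keeps_edge (d := v0) i_gt0 i_lt Pab); rewrite nth_index //.
apply/negP => /same_edgeP [[_ bv] | [av _]]; first by move: (b_neq_v jk); rewrite bv eqxx.
by move: (A_notin_B (a_A j)); rewrite av vB.
Qed.

Lemma rotation_compatible : compatible_path inc Q.
Proof.
apply/compatible_pathP => c y z Qcy Qcz; apply/negP => h.
have at_v0 w : path_has_edge Q v0 w -> w = v1 \/ w = v.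
  case/rotation_edge => [/(path_has_edge_head uP) | [[] | [v0v]]]; auto.
  by move: v0_neq_v; rewrite v0v eqxx.
have at_v w : path_has_edge Q v w -> path_has_edge P v w \/ w = v0.
  case/rotation_edge => [| [[vv0] | [_]]]; auto.
  by move: v0_neq_v; rewrite vv0 eqxx.
have [cv0 | cnv0] := eqVneq c v0; first subst c.
  move: h; case: (at_v0 _ Qcy) (at_v0 _ Qcz) => -> [] ->; rewrite ?inc_irr // => h.
    by move/negP: v1_compat.
  by move/inc_sym: h; apply/negP.
have [cv | cnv] := eqVneq c v; first subst c.
  move: h; case: (at_v _ Qcy) (at_v _ Qcz) => [Py | ->] [Pz | ->]; rewrite ?inc_irr // => h.
  - exact: compatP Py Pz h.
  - exact: (v_compat Py h).
  - by apply: (v_compat Pz); apply: inc_sym.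
have in_P w : path_has_edge Q c w -> path_has_edge P c w.
  by case/rotation_edge => // -[[ec _] | [ec _]]; [move: cnv0 | move: cnv]; rewrite ec eqxx.
exact: compatP (in_P _ Qcy) (in_P _ Qcz) h.
Qed.

Lemma rotation_good_head : good8 Q u.
Proof.
apply: (good_transfer _ _ uP uQ) good_u; rewrite ?mulr_ge0 ?sqrtr_ge0 ?(perm_size perm_Q) //.
move=> c y /rotation_edge [// | [[-> _] | [-> ->]]] auc h.
  by move: (A_notin_B v0A); rewrite (adj_A_B auc uA).
by case: (v_compat (y := u) _ h); rewrite path_has_edge_sym.
Qed.

Lemma rotation_good_last : good8 Q vl.
Proof.
apply: (good_transfer _ _ uP uQ) good_vl; rewrite ?mulr_ge0 ?sqrtr_ge0 ?(perm_size perm_Q) //.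
move=> c y /rotation_edge [// | [[-> ->] | [-> _]]] alc h.
  by move/negP: vl_compat.
by move: (A_notin_B (adj_B_A alc vlB)); rewrite vB.
Qed.

Lemma rotation_smooth : PS Q.
Proof.
have Qn : Q != [::] by rewrite -size_eq0 -(perm_size perm_Q).
have hQ : head v0 Q = u := head_posa_rotation v0 i_gt0 i_lt.
have lQ : last v0 Q = vl := last_posa_rotation v0 i_lt.
apply: (proper_smooth_intro (d := v0)); rewrite ?hQ ?lQ //.
- by move=> c y /rotation_edge [/adjP | [[-> ->] | [-> ->]]] //; rewrite adj_sym.
- exact: rotation_proper.
- exact: rotation_compatible.
- exact: rotation_good_head.
- exact: rotation_good_last.
Qed.

End Rotation.

Section Extension.
Variable j : 'I_m.
Local Notation x := (b j).
Local Notation y := (a j).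
Local Notation Q := [:: y, x & P].
Hypotheses (x_notin_P : x \notin P) (adj_v0x : adj v0 x).
Hypothesis v1_compat : ~~ inc v0 v1 x.
Hypothesis v0_compat : ~~ inc x y v0.
Hypotheses (good_y : good8 P y) (y_notin_XA : y \notin XA).
Hypothesis vl_compat : ~~ inc v0 vl x.
Hypothesis y_compat : ~~ inc y x vl.

Let y_notin_P : y \notin P.
Proof. exact: proper_path_matched_notin pP x_notin_P. Qed.

Let y_neq_x : y != x.
Proof. by apply: contraTneq (a_A j) => ->; apply: B_notin_A. Qed.

Let v0_neq_x : v0 != x.
Proof. by apply: contraNneq x_notin_P => <-; rewrite mem_head. Qed.

Let y_neq_v0 : y != v0.
Proof. by apply: contraNneq y_notin_P => ->; rewrite mem_head. Qed.

Let size_PQ : size P <= size Q.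
Proof. exact: leqW (leqnSn _). Qed.

Let uQ : uniq Q.
Proof. by rewrite /= !inE negb_or y_neq_x y_notin_P x_notin_P. Qed.

Lemma extension_edge c z : path_has_edge Q c z ->
  path_has_edge P c z \/ same_edge c z y x \/ same_edge c z x v0.
Proof. by rewrite !path_has_edge_cons2 => /or3P []; auto. Qed.

Lemma extension_proper : proper_path A B a b k Q.
Proof.
case/andP: pP => /forallP ej /eqP VPQ; apply/andP; split.
  apply/forallP => i; apply/implyP => ik.
  by rewrite !path_has_edge_cons2 (implyP (ej i) ik) !orbT.
have -> : [set z | (z \in Q) && (z \in A)] = y |: [set z | (z \in P) && (z \in A)].
  apply/setP => w; rewrite !inE; have [-> | _] /= := eqVneq w y; first by rewrite a_A.
  by have [-> | _] //= := eqVneq w x; rewrite (negPf (B_notin_A (b_B j))) !andbF.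
have -> : [set z | (z \in Q) && (z \in B)] = x |: [set z | (z \in P) && (z \in B)].
  apply/setP => w; rewrite !inE; have [-> | _] /= := eqVneq w y.
    by rewrite (negPf (A_notin_B (a_A j))) (negPf y_neq_x) !andbF.
  by have [-> | _] //= := eqVneq w x; rewrite b_B.
by rewrite imsetU1 VPQ fmatch_a.
Qed.

Lemma extension_compatible : compatible_path inc Q.
Proof.
have Pc c w : path_has_edge P c w -> c \in P by case/path_has_edge_mem/andP.
apply/compatible_pathP => c w w' Qcw Qcw'; apply/negP => h.
have [ey | cny] := eqVneq c y; first subst c.
  have at_y z : path_has_edge Q y z -> z = x.
    case/extension_edge => [/Pc | [] /same_edgeP [] []]; rewrite ?(negPf y_notin_P) //;
      by move=> /eqP; rewrite (negPf y_neq_x).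
  by move: h; rewrite (at_y _ Qcw) (at_y _ Qcw') inc_irr.
have [ex | cnx] := eqVneq c x; first subst c.
  have at_x z : path_has_edge Q x z -> z = y \/ z = v0.
    case/extension_edge => [/Pc | [] /same_edgeP [] []]; rewrite ?(negPf x_notin_P) //; auto;
      by move=> /eqP; rewrite eq_sym ?(negPf y_neq_x) ?(negPf v0_neq_x).
  move: h; case: (at_x _ Qcw) (at_x _ Qcw') => -> [] ->; rewrite ?inc_irr // => h.
    by move/negP: v0_compat.
  by move/inc_sym: h; apply/negP.
have [ev0 | cnv0] := eqVneq c v0; first subst c.
  have at_v0 z : path_has_edge Q v0 z -> z = v1 \/ z = x.
    case/extension_edge => [/(path_has_edge_head uP) | [] /same_edgeP [] []]; auto;
      by move=> /eqP; rewrite (negPf v0_neq_x).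
  move: h; case: (at_v0 _ Qcw) (at_v0 _ Qcw') => -> [] ->; rewrite ?inc_irr // => h.
    by move/negP: v1_compat.
  by move/inc_sym: h; apply/negP.
have in_P z : path_has_edge Q c z -> path_has_edge P c z.
  by case/extension_edge => // -[] /same_edgeP [] [ec _];
    [move: cny | move: cnx | move: cnx | move: cnv0]; rewrite ec eqxx.
exact: compatP (in_P _ Qcw) (in_P _ Qcw') h.
Qed.

Lemma extension_good_head : good8 Q y.
Proof.
apply: (good_transfer _ size_PQ uP uQ) good_y; rewrite ?mulr_ge0 ?sqrtr_ge0 //.
move=> c z /extension_edge [// | [] /same_edgeP [] [-> ->]] ayc h; exfalso.
- by rewrite adj_irr in ayc.
- by rewrite inc_irr in h.
- by move/negP: v0_compat.
- by move: (A_notin_B v0A); rewrite (adj_A_B ayc (a_A j)).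
Qed.

Lemma extension_good_last : good8 Q vl.
Proof.
apply: (good_transfer _ size_PQ uP uQ) good_vl; rewrite ?mulr_ge0 ?sqrtr_ge0 //.
have x_not_adj_vl : ~~ adj vl x.
  by apply/negP => /adj_B_A /(_ vlB); rewrite (negPf (B_notin_A (b_B j))).
move=> c z /extension_edge [// | [] /same_edgeP [] [-> ->]] alc h; exfalso.
- by move/negP: y_compat; apply; apply: inc_sym.
- by rewrite (negPf x_not_adj_vl) in alc.
- by rewrite (negPf x_not_adj_vl) in alc.
- by move/negP: vl_compat.
Qed.

Lemma extension_smooth : PS [:: f x, x & P].
Proof.
rewrite fmatch_b; apply: (proper_smooth_intro (d := y)) => //.
- by move=> c z /extension_edge [/adjP | [] /same_edgeP [] [-> ->]];
    rewrite // ?adj_ab // adj_sym ?adj_ab.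
- exact: extension_proper.
- exact: a_A.
- exact: extension_compatible.
- exact: extension_good_head.
- exact: extension_good_last.
Qed.

End Extension.

Let good_v0 : good8 P v0.
Proof. by case/and5P: HP => _ _ _ _ /and5P []. Qed.

Let v0_notin_XA : v0 \notin XA.
Proof. by case/and5P: HP => _ _ _ _ /and5P []. Qed.

Let m_gt0 : 0 < m.
Proof. by rewrite -card_A; apply/card_gt0P; exists v0. Qed.

Local Notation before v := (nth v0 P (index v P).-1).

Definition rotatable v := [&& [forall j : 'I_m, (j < k) ==> (b j != v)],
  ~~ inc v0 v1 v, ~~ bad_nb adj inc P v0 v, before v \notin XA,
  good8 P (before v) & ~~ inc v0 vl v].

Definition extendable j := [&& ~~ inc v0 v1 (b j), ~~ inc (b j) (a j) v0,
  good8 P (a j), a j \notin XA, ~~ inc v0 vl (b j) & ~~ inc (a j) (b j) vl].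

Lemma rotatable_smooth v : v \in nbhd adj v0 :&: [set w | w \in P] -> rotatable v ->
  PS (posa_rotation P (index v P)).
Proof.
rewrite !inE => /andP [av vP] /andP [/forallP bv /and5P [*]].
by apply: rotation_smooth => // j; apply: implyP (bv j).
Qed.

Lemma before_inj : {in [predD1 P & v0] &, injective (fun v => before v)}.
Proof.
have idx w : w \in [predD1 P & v0] -> [/\ w \in P, 0 < index w P & index w P < size P].
  by case/andP=> wv0 wP; rewrite index_mem wP /= eq_sym (negPf wv0).
move=> v w /idx [vP iv0 iv] /idx [wP iw0 iw] E.
have : index (before v) P = index (before w) P by rewrite E.
rewrite !index_uniq // ?(leq_ltn_trans (leq_pred _)) // => /(congr1 succn).
by rewrite !prednK // => iE; rewrite -(nth_index v0 vP) -(nth_index v0 wP) iE.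
Qed.

Hypothesis P_maximal : ~ (exists x, (x \notin P) && PS [:: f x, x & P]).

Lemma nbhd_notin_path_sub :
  nbhd adj v0 :\: [set w | w \in P] \subset b @: [set j in [set: 'I_m] | ~~ extendable j].
Proof.
apply/subsetP => x; rewrite !inE => /andP [xP av0x].
have [j xj] := B_matched (adj_A_B av0x v0A); subst x.
rewrite mem_imset // !inE; apply/negP => /andP [? /and5P [*]]; apply: P_maximal.
by exists (b j); rewrite xP extension_smooth.
Qed.

Section NeighbourCount.
Local Open Scope ring_scope.
Local Notation S := (nbhd adj v0 :&: [set w | w \in P]).
Local Notation NG := [set x | ~~ good8 P x].
Local Notation t := (Num.sqrt mu).

Lemma card_bad_nb_le v :
  #|[set x | bad_nb adj inc P x v]|%:R <= (v \in P)%:R * (2 * (mu * m%:R)).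
Proof.
have [vP | vP] := boolP (v \in P); last first.
  suff -> : [set x | bad_nb adj inc P x v] = set0 by rewrite cards0 mul0r.
  by apply/setP => x; rewrite !inE; apply: contraNF vP => /and3P [].
set p := nth v P (index v P).-1; set q := nth v P (index v P).+1.
apply: le_trans (_ : #|[set x | inc v x p] :|: [set x | inc v x q]|%:R <= _).
  rewrite ler_nat subset_leq_card //; apply/subsetP => x; rewrite !inE.
  by case/and3P=> _ _ /orP [] /andP [_ ->]; rewrite ?orbT.
apply: le_trans (_ : #|[set x | inc v x p]|%:R + #|[set x | inc v x q]|%:R <= _).
  by rewrite -natrD ler_nat leq_card_setU.
by rewrite mul1r mulr2n mulrDl mul1r lerD // card_inc_le_sym.
Qed.

Lemma card_not_good : 4 * #|NG|%:R <= t * m%:R.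
Proof.
set n := size P.
pose F x : R := #|[set w | bad_nb adj inc P x w]|%:R.
have key : #|NG|%:R * (8 * t * n%:R) <= n%:R * (2 * (mu * m%:R)).
  apply: (@le_trans _ _ (#|[set x | 8 * t * n%:R <= F x]|%:R * (8 * t * n%:R))).
    by rewrite ler_wpM2r ?mulr_ge0 ?sqrtr_ge0 // ler_nat subset_leq_card //;
      apply/subsetP => x; rewrite !inE /good -leNgt.
  apply: le_trans (@markov_card _ _ F _ (fun x => ler0n _ _)) _.
  rewrite -natr_sum (double_count (fun x w => bad_nb adj inc P x w)) natr_sum.
  apply: le_trans (ler_sum _ (fun w _ => card_bad_nb_le w)) _.
  rewrite -mulr_suml ler_wpM2r ?mulr_ge0 ?(ltW mu_gt0) //.
  rewrite -natr_sum ler_nat /n -(card_uniqP uP) -sum1_card [leqRHS]big_mkcond /=.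
  by apply: leq_sum => w _; case: (w \in P).
have mu_t : t * t = mu by rewrite -expr2 sqr_sqrtr // ltW.
have pos : 0 < 2 * t * n%:R by rewrite !mulr_gt0 ?sqrtr_gt0 ?ltr0n.
have e1 : 4 * #|NG|%:R * (2 * t * n%:R) = #|NG|%:R * (8 * t * n%:R) by ring.
have e2 : t * m%:R * (2 * t * n%:R) = n%:R * (2 * (t * t * m%:R)) by ring.
by rewrite -(ler_pM2r pos) e1 e2 mu_t.
Qed.

Lemma card_not_rotatable :
  #|[set v in S | ~~ rotatable v]|%:R <=
  k%:R + mu * m%:R + 16 * (t * m%:R) + #|XA|%:R + #|NG|%:R + mu * m%:R.
Proof.
have id_inj : {in S &, injective id} by [].
have before_inj_S : {in S &, injective (fun v => before v)}.
  apply: sub_in2 before_inj => v; rewrite !inE => /andP [av0v ->]; rewrite andbT.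
  by apply: contraTneq av0v => ->; rewrite adj_irr.
rewrite /rotatable -!addrA; apply: le_trans (card_sep_nand _ _ _ _) _; apply: lerD.
  rewrite ler_nat; apply: leq_trans (card_ord_lt m k); rewrite -(card_imset _ b_inj).
  apply: leq_card_sep_in id_inj _ => v _ /forallPn [j].
  by rewrite negb_imply negbK => /andP [jk /eqP <-]; apply: imset_f; rewrite inE.
apply: le_trans (card_sep_nand _ _ _ _) _; apply: lerD.
  apply: le_trans (card_inc_le v0 v1); rewrite ler_nat.
  by apply: leq_card_sep_in id_inj _ => v _; rewrite negbK inE.
apply: le_trans (card_sep_nand _ _ _ _) _; apply: lerD.
  apply: le_trans (_ : #|[set v | bad_nb adj inc P v0 v]|%:R <= _).
    by rewrite ler_nat; apply: leq_card_sep_in id_inj _ => v _; rewrite negbK inE.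
  apply: ltW; apply: lt_le_trans good_v0 _.
  have size_le : (size P)%:R <= 2 * m%:R :> R.
    by rewrite -natrM ler_nat -(card_uniqP uP) (leq_trans (max_card _) card_T_le).
  have -> : 16 * (t * m%:R) = 8 * t * (2 * m%:R) by ring.
  by rewrite ler_wpM2l ?mulr_ge0 ?sqrtr_ge0.
apply: le_trans (card_sep_nand _ _ _ _) _; apply: lerD.
  by rewrite ler_nat; apply: leq_card_sep_in before_inj_S _ => v _; rewrite negbK.
apply: le_trans (card_sep_nand _ _ _ _) _; apply: lerD.
  by rewrite ler_nat; apply: leq_card_sep_in before_inj_S _ => v _; rewrite inE.
apply: le_trans (card_inc_le v0 vl); rewrite ler_nat.
by apply: leq_card_sep_in id_inj _ => v _; rewrite negbK inE.
Qed.

Lemma card_not_extendable :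
  #|[set j in [set: 'I_m] | ~~ extendable j]|%:R <=
  mu * m%:R + t * m%:R + #|NG|%:R + #|XA|%:R + mu * m%:R + t * m%:R.
Proof.
have id_inj : {in [set: 'I_m] &, injective id} by [].
rewrite /extendable -!addrA; apply: le_trans (card_sep_nand _ _ _ _) _; apply: lerD.
  apply: le_trans (card_inc_le v0 v1); rewrite ler_nat.
  by apply: leq_card_sep_in (in2W b_inj) _ => j _; rewrite negbK inE.
apply: le_trans (card_sep_nand _ _ _ _) _; apply: lerD.
  apply: ltW; apply: le_lt_trans (_ : _ <= #|[set i | inc (b i) (a i) v0]|%:R) _.
    by rewrite ler_nat; apply: leq_card_sep_in id_inj _ => j _; rewrite negbK inE.
  by move: v0_notin_XA; rewrite inE v0A /= -ltNge.
apply: le_trans (card_sep_nand _ _ _ _) _; apply: lerD.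
  by rewrite ler_nat; apply: leq_card_sep_in (in2W a_inj) _ => j _; rewrite inE.
apply: le_trans (card_sep_nand _ _ _ _) _; apply: lerD.
  by rewrite ler_nat; apply: leq_card_sep_in (in2W a_inj) _ => j _; rewrite negbK.
apply: le_trans (card_sep_nand _ _ _ _) _; apply: lerD.
  apply: le_trans (card_inc_le v0 vl); rewrite ler_nat.
  by apply: leq_card_sep_in (in2W b_inj) _ => j _; rewrite negbK inE.
apply: ltW; apply: le_lt_trans (_ : _ <= #|[set i | inc (a i) (b i) vl]|%:R) _.
  by rewrite ler_nat; apply: leq_card_sep_in id_inj _ => j _; rewrite negbK inE.
by move: vl_notin_XB; rewrite inE vlB /= -ltNge.
Qed.

Variable gamma : R.
Hypothesis k_eq : k%:R = gamma * m%:R.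
Hypothesis sqrt_mu_le1 : t <= 1.

Lemma card_rotatable_ge :
  (deg adj v0)%:R - (25 * t + 2 * gamma) * m%:R <= #|[set v in S | rotatable v]|%:R.
Proof.
have out_le :
    (#|nbhd adj v0 :\: [set w | w \in P]| <= #|[set j in [set: 'I_m] | ~~ extendable j]|)%N.
  exact: leq_trans (subset_leq_card nbhd_notin_path_sub) (leq_imset_card _ _).
have mu_le : mu * m%:R <= t * m%:R.
  rewrite ler_wpM2r // -[leLHS]sqr_sqrtr ?(ltW mu_gt0) // expr2.
  by rewrite ler_piMl ?sqrtr_ge0.
have k_ge0 : 0 <= gamma * m%:R by rewrite -k_eq.
have tm_ge0 : 0 <= t * m%:R by rewrite mulr_ge0 ?sqrtr_ge0.
(* The exceptional sets total at most k + 4 mu m + 18 sqrt(mu) m + 2|X_A| + 2 #NG,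
   that is (gamma + 24.5 sqrt(mu)) m. *)
move: out_le; rewrite -(ler_nat R) /deg -(cardsID [set w | w \in P] (nbhd adj v0)).
rewrite -(cards_sepID S rotatable) !natrD.
move: card_not_rotatable card_not_extendable (card_XA m_gt0) card_not_good.
have -> : (25 * t + 2 * gamma) * m%:R = 25 * (t * m%:R) + 2 * (gamma * m%:R) by ring.
rewrite k_eq; lra.
Qed.

End NeighbourCount.
End SmoothPath.
End SmoothPaths.

Local Open Scope ring_scope.

Theorem lemma4p4 (R : realType) (mu beta gamma : R)
  (T : finType) (adj : rel T) (inc : T -> T -> T -> bool)
  (A B : {set T}) (m k : nat) (a b : 'I_m -> T) (v0 : T) (s : seq T) :
  let P := v0 :: s in
  0 < mu -> 0 < beta -> 0 < gamma ->
  gamma + beta + Num.sqrt mu < 1 / 2000 ->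
  (* gamma m is treated as an integer k *)
  k%:R = gamma * m%:R ->
  (* G bipartite simple graph with bipartition A cup B, |A| = |B| = m *)
  simple_graph adj ->
  A :|: B = [set: T] -> [disjoint A & B] ->
  (forall x y, adj x y -> ((x \in A) && (y \in B)) || ((x \in B) && (y \in A))) ->
  #|A| = m -> #|B| = m ->
  (forall v : T, (m%:R / 10 <= (deg adj v)%:R :> R)) ->
  (1 - beta) * (m ^ 2)%:R <= #|[set p : T * T | (p.1 \in A) && adj p.1 p.2]|%:R ->
  (* F is a (mu m)-bounded incompatibility system *)
  incompat_system adj inc -> bounded_inc adj inc (mu * m%:R) ->
  (* perfect matching e_i = {a_i, b_i} *)
  injective a -> injective b ->
  (forall i, a i \in A) -> (forall i, b i \in B) -> (forall i, adj (a i) (b i)) ->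
  proper_smooth adj inc A B a b mu k P ->
  ~ (exists x, (x \notin P) &&
       proper_smooth adj inc A B a b mu k [:: fmatch a b x, x & P]) ->
  exists Z : {set T},
    [/\ Z \subset nbhd adj (v0) :&: [set v | v \in P],
       (deg adj (v0))%:R - (25 * Num.sqrt mu + 2 * gamma) * m%:R <= #|Z|%:R &
       forall v, v \in Z ->
         proper_smooth adj inc A B a b mu k
           (rev (take (index v P) P) ++ drop (index v P) P)].
Proof.
move=> P mu_gt0 beta_gt0 gamma_gt0 small k_eq [adj_sym adj_irr] AB_cover AB_disjoint adj_bipartite
  card_A card_B _ _ inc_system inc_bounded a_inj b_inj a_A b_B adj_ab P_smooth P_maximal.
have sqrt_mu_le1 : Num.sqrt mu <= 1 by lra.
exists [set v in nbhd adj v0 :&: [set w | w \in P] | rotatable mu adj inc A k a b v0 s v].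
split.
- by apply/subsetP => v; rewrite inE => /andP [].
- by apply: (card_rotatable_ge (B := B)).
- by move=> v; rewrite inE => /andP [vS v_rot]; apply: rotatable_smooth.
Qed.
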